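(* Let $q$ be a prime power and let $n_1,n_2$ be coprime odd positive integers, each coprime to $q$. If $x-1$ is the only SCRIM factor of $x^{n_1}-1$ and the only SCRIM factor of $x^{n_2}-1$ in $\mathbb{F}_{q^2}[x]$, then $|\Omega_{q^2,n_1n_2}|=|\Omega_{q^2,n_1}|\,|\Omega_{q^2,n_2}|=1$.
   Context: $\mathbb{F}_{q^2}$ is the finite field with $q^2$ elements. For $\alpha\in\mathbb{F}_{q^2}$ put $\bar\alpha=\alpha^q$, and for $f(x)=\sum_i f_ix^i$ put $\overline{f(x)}=\sum_i \bar f_i x^i$. For $f(x)$ with $f(0)\neq 0$, $f^*(x)=x^{\deg f}f(0)^{-1}f(1/x)$ and $f^\dagger(x)=\overline{f^*(x)}$. A polynomial is SCRIM if it is monic, irreducible over $\mathbb{F}_{q^2}$, has nonzero constant term, and satisfies $f=f^\dagger$. $\Omega_{q^2,n}$ denotes the set of SCRIM polynomials in $\mathbb{F}_{q^2}[x]$ dividing $x^n-1$. *)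

From HB Require Import structures.
From mathcomp Require Import all_boot all_order all_algebra all_field.
From mathcomp Require Import boolp.
Set Implicit Arguments. Unset Strict Implicit. Unset Printing Implicit Defensive.
Import GRing.Theory.
Local Open Scope ring_scope.

Definition prime_power (q : nat) : Prop :=
  exists p k : nat, [/\ prime p, (0 < k)%N & q = (p ^ k)%N].

Definition conjq (F : finFieldType) (q : nat) (a : F) : F := a ^+ q.
Definition conjp (F : finFieldType) (q : nat) (f : {poly F}) : {poly F} :=
  map_poly (conjq q) f.

(* f^*(x) = x^{deg f} f(0)^{-1} f(1/x) : coefficient of x^i is f(0)^{-1} f_{deg f - i} *)
Definition recip (F : finFieldType) (f : {poly F}) : {poly F} :=
  (f`_0)^-1 *: \poly_(i < size f) f`_((size f).-1 - i).

Definition dagger (F : finFieldType) (q : nat) (f : {poly F}) : {poly F} :=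
  conjp q (recip f).

Definition SCRIM (F : finFieldType) (q : nat) (f : {poly F}) : Prop :=
  [/\ f \is monic, irreducible_poly f, f`_0 != 0 & f = dagger q f].

Definition inOmega (F : finFieldType) (q n : nat) (f : {poly F}) : Prop :=
  SCRIM q f /\ f %| 'X^n - 1.

(* Omega_{q^2,n} as a finite set; for n > 0 every divisor of x^n - 1 has
   size <= n+1, so it is captured inside {poly_(n.+1) F}. *)
Definition Omega (F : finFieldType) (q n : nat) : {set {poly_(n.+1) F}} :=
  [set g : {poly_(n.+1) F} | `[< inOmega q n (val g) >]].

(* If f is in Omega_{q^2, n1 n2} and a is a root of f in an extension field, then,
   f being irreducible and self-conjugate-reciprocal, every polynomial over F_{q^2}
   vanishing at a also vanishes at a^{-q}; this closure property passes to all
   powers of a. Hence the minimal polynomial of the n1-th root of unity a^{n2} is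
   itself SCRIM and divides x^{n1} - 1, so it is x - 1 and a^{n2} = 1; likewise
   a^{n1} = 1. As n1 and n2 are coprime, a = 1 and f = x - 1. So x - 1 is the
   only element of each of the three sets. *)
From HB Require Import structures.
From mathcomp Require Import all_boot all_order all_algebra all_field.
From mathcomp Require Import boolp zify cyclic.
Import GRing.Theory.
Local Open Scope ring_scope.
Set Implicit Arguments. Unset Strict Implicit.

Section RootsInExtensions.
Variables (F L : fieldType) (phi : {rmorphism F -> L}).
Local Notation "p ^phi" := (map_poly phi p) (at level 2, format "p ^phi").

Lemma root_map_dvdp (g h : {poly F}) (x : L) :
  g %| h -> root g^phi x -> root h^phi x.
Proof. by rewrite -(dvdp_map phi); exact: root_dvdp. Qed.

Lemma irredp_dvdp_root (g h : {poly F}) (x : L) :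
  irreducible_poly g -> root g^phi x -> root h^phi x -> g %| h.
Proof.
move=> g_irr gx hx.
have g_neq0 : g != 0 by apply: contraTneq g_irr.1 => ->; rewrite size_poly0.
have rx : root (h %% g)^phi x.
  by move: hx; rewrite {1}(divp_eq h g) rmorphD rmorphM /root !hornerE (eqP gx) mulr0 add0r.
apply/modp_eq0P/eqP; apply: contraT => r_neq0.
have := iffRL (subfx_irreducibleP gx g_neq0) g_irr _ rx r_neq0.
by rewrite leqNgt ltn_modp g_neq0.
Qed.

Lemma root_map_Xn_sub1 (n : nat) (x : L) : root ('X^n - 1)^phi x = (x ^+ n == 1).
Proof. by rewrite rmorphB rmorph1 rmorphXn /= map_polyX /root !hornerE subr_eq0. Qed.

Lemma exists_irredp_root (h : {poly F}) (x : L) : h != 0 -> root h^phi x ->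
  exists2 g : {poly F}, g \is monic & irreducible_poly g /\ root g^phi x.
Proof.
move=> h_neq0 hx.
pose P n := `[< exists h : {poly F}, [/\ h != 0, size h = n & root h^phi x] >].
have [|m /asboolP [g [g_neq0 <- gx]] g_min] := ex_minnP (P := P).
  by exists (size h); apply/asboolP; exists h.
have lc_neq0 : (lead_coef g)^-1 != 0 by rewrite invr_eq0 lead_coef_eq0.
exists ((lead_coef g)^-1 *: g); first by rewrite monicE lead_coefZ mulVf ?lead_coef_eq0.
have gx' : root ((lead_coef g)^-1 *: g)^phi x by rewrite map_polyZ rootZ ?fmorph_eq0.
split=> //; apply/(subfx_irreducibleP gx'); first by rewrite scaler_eq0 negb_or lc_neq0.
move=> r rx r_neq0; rewrite size_scale //; apply: g_min; apply/asboolP.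
by exists r.
Qed.

Lemma irredp_root_coef0 (g : {poly F}) (x : L) :
  irreducible_poly g -> root g^phi x -> x != 0 -> g`_0 != 0.
Proof.
move=> g_irr gx; apply: contra_neq => g0_eq0.
have X_dvd_g : 'X - 0%:P %| g by rewrite dvdp_XsubCl /root horner_coef0 g0_eq0.
have X_size : size ('X - 0%:P : {poly F}) != 1%N by rewrite size_XsubC.
have /andP[_ g_dvd_X] := g_irr.2 _ X_size X_dvd_g.
by move: (root_map_dvdp g_dvd_X gx); rewrite map_polyXsubC rmorph0 root_XsubC => /eqP.
Qed.
End RootsInExtensions.

Lemma monic_dvdp_size_eq (F : fieldType) (g h : {poly F}) :
  g \is monic -> h \is monic -> g %| h -> size h = size g -> h = g.
Proof. by move=> gm hm gh hs; apply/esym/eqP; rewrite -eqp_monic // -dvdp_size_eqp // hs. Qed.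

Lemma unity_neq0 (R : nzRingType) (x : R) (n : nat) :
  (0 < n)%N -> x ^+ n = 1 -> x != 0.
Proof.
by move=> n_gt0; apply: contra_eq_neq => ->; rewrite expr0n gtn_eqF // eq_sym oner_neq0.
Qed.

Lemma invf_unity (F : fieldType) (x : F) (n : nat) :
  (0 < n)%N -> x ^+ n = 1 -> x^-1 = x ^+ n.-1.
Proof.
move=> n_gt0 xn; have x_neq0 := unity_neq0 n_gt0 xn.
by apply: (mulfI x_neq0); rewrite mulfV // -exprS prednK.
Qed.

Lemma unity_coprime_eq1 (R : nzRingType) (x : R) (m n : nat) : (0 < m)%N ->
  coprime m n -> x ^+ m = 1 -> x ^+ n = 1 -> x = 1.
Proof.
move=> m_gt0 /eqP mn xm xn; have [km kn Bezout _] := egcdnP n m_gt0.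
have := congr1 (GRing.exp x) Bezout; rewrite mn exprD expr1.
by rewrite mulnC exprM xm expr1n mulnC exprM xn expr1n mul1r.
Qed.

Section Dagger.
Variables (F : finFieldType) (q : nat).
Hypothesis q_gt0 : (0 < q)%N.

Lemma conjq0 : conjq q (0 : F) = 0.
Proof. by rewrite /conjq expr0n gtn_eqF. Qed.

Lemma recip_monic (g : {poly F}) : g`_0 != 0 -> recip g \is monic.
Proof.
move=> g0_neq0; have size_g_gt0 : (0 < size g)%N.
  by rewrite size_poly_gt0; apply: contra_neq g0_neq0 => ->; rewrite coef0.
rewrite monicE /recip lead_coefZ lead_coef_poly ?prednK ?subnn ?mulVf //.
Qed.

Lemma size_recip (g : {poly F}) : g`_0 != 0 -> size (recip g) = size g.
Proof.
move=> g0_neq0; rewrite /recip size_scale ?invr_eq0 //.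
by rewrite size_poly_eq // subnn.
Qed.

Lemma dagger_monic (g : {poly F}) : g`_0 != 0 -> dagger q g \is monic.
Proof.
move=> g0_neq0; rewrite monicE /dagger /conjp lead_coef_map_id0 ?conjq0 //.
  by rewrite (monicP (recip_monic g0_neq0)) /conjq expr1n.
by rewrite (monicP (recip_monic g0_neq0)) /conjq expr1n oner_neq0.
Qed.

Lemma size_dagger (g : {poly F}) : g`_0 != 0 -> size (dagger q g) = size g.
Proof.
move=> g0_neq0; rewrite /dagger /conjp size_map_poly_id0 ?size_recip //.
by rewrite (monicP (recip_monic g0_neq0)) /conjq expr1n oner_neq0.
Qed.
End Dagger.

Section DaggerRoots.
Variables (F : finFieldType) (L : fieldType) (phi : {rmorphism F -> L}) (q : nat).
Hypothesis q_pchar : [pchar L].-nat q.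
Local Notation "p ^phi" := (map_poly phi p) (at level 2, format "p ^phi").

Let q_gt0 : (0 < q)%N. Proof. by case/andP: q_pchar. Qed.

Lemma horner_conjp (r : {poly F}) (y : L) : (conjp q r)^phi.[y ^+ q] = r^phi.[y] ^+ q.
Proof.
rewrite (@horner_coef_wide _ (size r)); last by rewrite size_map_poly size_poly.
rewrite horner_coef size_map_poly.
have expr0q : (0 : L) ^+ q = 0 by rewrite expr0n gtn_eqF.
rewrite (big_morph _ (fun x y => exprDn_pchar x y q_pchar) expr0q).
apply: eq_bigr => i _.
by rewrite !coef_map_id0 ?rmorph0 ?conjq0 // /conjq rmorphXn exprMn -!exprM mulnC.
Qed.

Lemma horner_recip (g : {poly F}) (x : L) : x != 0 ->
  (recip g)^phi.[x^-1] = phi (g`_0)^-1 * (x^-1 ^+ (size g).-1 * g^phi.[x]).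
Proof.
move=> x_neq0; set n := size g.
rewrite /recip map_polyZ hornerZ; congr (_ * _).
rewrite (@horner_coef_wide _ n); last by rewrite size_map_poly size_poly.
rewrite horner_coef size_map_poly big_distrr /=.
rewrite (reindex_inj rev_ord_inj); apply: eq_bigr => i _ /=.
have i_lt : (i < n)%N := ltn_ord i.
have -> : (n - i.+1 = n.-1 - i)%N by lia.
rewrite !coef_map_id0 ?rmorph0 // coef_poly -/n ifT; last by lia.
have -> : (n.-1 - (n.-1 - i) = i)%N by lia.
rewrite mulrCA; congr (_ * _).
have i_le : (i <= n.-1)%N by lia.
by rewrite -{2}(subnK i_le) exprD -mulrA -exprMn mulVf // expr1n mulr1.
Qed.

Lemma dagger_root (g : {poly F}) (x : L) :
  x != 0 -> root g^phi x -> root (dagger q g)^phi (x^-1 ^+ q).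
Proof.
move=> x_neq0 /eqP gx.
by rewrite /root /dagger horner_conjp horner_recip // gx !mulr0 expr0n gtn_eqF.
Qed.

Definition dagger_stable (x : L) :=
  forall h : {poly F}, root h^phi x -> root h^phi (x^-1 ^+ q).

Lemma self_dagger_root_stable (f : {poly F}) (a : L) :
  irreducible_poly f -> f = dagger q f -> a != 0 -> root f^phi a -> dagger_stable a.
Proof.
move=> f_irr f_dagger a_neq0 fa h ha.
apply: root_map_dvdp (irredp_dvdp_root f_irr fa ha) _.
by rewrite {1}f_dagger; exact: dagger_root.
Qed.

Lemma dagger_stableX (x : L) (k : nat) : dagger_stable x -> dagger_stable (x ^+ k).
Proof.
move=> x_stable h hxk; have := x_stable (h \Po 'X^k).
rewrite /root !map_comp_poly !horner_comp !map_polyXn !hornerXn.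
by rewrite -!exprVn -!exprM mulnC; apply.
Qed.

Lemma dagger_stable_iter (n : nat) (x : L) : (0 < n)%N -> x ^+ n = 1 ->
  dagger_stable x ->
  forall (j : nat) (h : {poly F}), root h^phi x -> root h^phi (x ^+ ((n.-1 * q) ^ j)).
Proof.
move=> n_gt0 + + j; elim: j x => [|j IHj] x xn x_stable h hx; first by rewrite expr1.
have x_s : x^-1 ^+ q = x ^+ (n.-1 * q) by rewrite (invf_unity n_gt0 xn) exprM.
rewrite expnS exprM; apply: IHj; last by rewrite -x_s; exact: x_stable.
  by rewrite -exprM mulnC exprM xn expr1n.
exact: dagger_stableX.
Qed.

Lemma dagger_stable_irredp_self_dagger (n : nat) (b : L) (g : {poly F}) :
  (0 < n)%N -> coprime n q -> b ^+ n = 1 -> dagger_stable b ->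
  g \is monic -> irreducible_poly g -> root g^phi b -> g = dagger q g.
Proof.
(* On n-th roots of unity x |-> x^-1 ^+ q is x |-> x ^+ s, and s ^ totient n = 1 mod n,
   so b is the image of its conjugate c. *)
move=> n_gt0 nq bn b_stable g_monic g_irr gb.
set s := (n.-1 * q)%N; set c := b ^+ (s ^ (totient n).-1).
have cn : c ^+ n = 1 by rewrite -exprM mulnC exprM bn expr1n.
have gc : root g^phi c := dagger_stable_iter n_gt0 bn b_stable _ gb.
have c_dagger : c^-1 ^+ q = b.
  rewrite (invf_unity n_gt0 cn) -exprM -/s -exprM -expnSr prednK ?totient_gt0 //.
  have s_coprime : coprime s n by rewrite coprimeMl coprimePn // coprime_sym.
  by rewrite -(expr_mod _ bn) Euler_exp_totient // expr_mod // expr1.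
have g_dvd : g %| dagger q g.
  by apply: irredp_dvdp_root g_irr gb _; rewrite -c_dagger dagger_root ?(unity_neq0 n_gt0).
have g0_neq0 := irredp_root_coef0 g_irr gb (unity_neq0 n_gt0 bn).
apply/esym/(monic_dvdp_size_eq g_monic _ g_dvd); first exact: dagger_monic.
exact: size_dagger.
Qed.

Lemma dagger_stable_unity_eq1 (n : nat) (b : L) :
  (0 < n)%N -> coprime n q -> (forall f : {poly F}, inOmega q n f -> f = 'X - 1) ->
  b ^+ n = 1 -> dagger_stable b -> b = 1.
Proof.
move=> n_gt0 nq Omega_n bn b_stable.
have Xn_root : root ('X^n - 1 : {poly F})^phi b by rewrite root_map_Xn_sub1 bn.
have [g g_monic [g_irr gb]] :=
  exists_irredp_root (monic_neq0 (monicXnsubC 1 n_gt0)) Xn_root.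
have g0_neq0 := irredp_root_coef0 g_irr gb (unity_neq0 n_gt0 bn).
have g_Omega : inOmega q n g.
  split; last exact: irredp_dvdp_root g_irr gb Xn_root.
  by split=> //; exact: dagger_stable_irredp_self_dagger nq bn b_stable g_monic g_irr gb.
by move: gb; rewrite (Omega_n g g_Omega) -polyC1 map_polyXsubC rmorph1 root_XsubC => /eqP.
Qed.
End DaggerRoots.

Lemma dagger_XsubC (F : finFieldType) (q : nat) (c : F) : [pchar F].-nat q -> c != 0 ->
  dagger q ('X - c%:P) = 'X - (c^-1 ^+ q)%:P.
Proof.
move=> q_pchar c_neq0; have q_gt0 : (0 < q)%N by case/andP: q_pchar.
have c0_neq0 : ('X - c%:P)`_0 != 0 by rewrite coefB coefX coefC /= sub0r oppr_eq0.
apply: monic_dvdp_size_eq (monicXsubC _) (dagger_monic q_gt0 c0_neq0) _ _.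
  have := @dagger_root F F idfun q q_pchar ('X - c%:P) c c_neq0.
  by rewrite !map_poly_id // dvdp_XsubCl root_XsubC eqxx; apply.
by rewrite size_dagger // !size_XsubC.
Qed.

Lemma XsubC1_inOmega (F : finFieldType) (q n : nat) :
  [pchar F].-nat q -> inOmega q n ('X - 1 : {poly F}).
Proof.
move=> q_pchar; rewrite -polyC1.
split; last by rewrite dvdp_XsubCl /root !hornerE expr1n subrr.
split; [exact: monicXsubC | exact: irredp_XsubC | |].
  by rewrite coefB coefX coefC /= sub0r oppr_eq0 oner_neq0.
by rewrite dagger_XsubC ?oner_neq0 // invr1 expr1n.
Qed.

Lemma inOmega_mul_coprime (F : finFieldType) (q n1 n2 : nat) : [pchar F].-nat q ->
  (0 < n1)%N -> (0 < n2)%N -> coprime n1 n2 -> coprime n1 q -> coprime n2 q ->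
  (forall f : {poly F}, inOmega q n1 f -> f = 'X - 1) ->
  (forall f : {poly F}, inOmega q n2 f -> f = 'X - 1) ->
  forall f : {poly F}, inOmega q (n1 * n2) f -> f = 'X - 1.
Proof.
move=> q_pchar n1_gt0 n2_gt0 n12 n1q n2q Omega1 Omega2 f.
move=> [[f_monic f_irr _ f_dagger] f_dvd].
have [E [phi [a fa _]]] := countable_field_extension f_irr.1.
have q_pcharE : [pchar E].-nat q by rewrite (eq_pnat _ (fmorph_pchar phi)).
have /eqP a_unity : a ^+ (n1 * n2) == 1.
  by rewrite -(root_map_Xn_sub1 phi) (root_map_dvdp f_dvd).
have n_gt0 : (0 < n1 * n2)%N by rewrite muln_gt0 n1_gt0.
have a_stable :=
  self_dagger_root_stable q_pcharE f_irr f_dagger (unity_neq0 n_gt0 a_unity) fa.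
have a_n2 : a ^+ n2 = 1.
  have a_n2_n1 : (a ^+ n2) ^+ n1 = 1 by rewrite -exprM mulnC.
  by have := dagger_stable_unity_eq1 q_pcharE n1_gt0 n1q Omega1 a_n2_n1
    (dagger_stableX a_stable).
have a_n1 : a ^+ n1 = 1.
  have a_n1_n2 : (a ^+ n1) ^+ n2 = 1 by rewrite -exprM.
  by have := dagger_stable_unity_eq1 q_pcharE n2_gt0 n2q Omega2 a_n1_n2
    (dagger_stableX a_stable).
have a_eq1 := unity_coprime_eq1 n1_gt0 n12 a_n1 a_n2.
have f_dvd_X : f %| 'X - 1%:P.
  by apply: irredp_dvdp_root f_irr fa _; rewrite map_polyXsubC rmorph1 root_XsubC a_eq1.
rewrite -polyC1; apply/esym/(monic_dvdp_size_eq f_monic (monicXsubC 1) f_dvd_X).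
apply/eqP; rewrite size_XsubC eqn_leq f_irr.1 /= -(size_XsubC (1 : F)).
exact: dvdp_leq (monic_neq0 (monicXsubC 1)) f_dvd_X.
Qed.

Lemma card_Omega_eq1 (F : finFieldType) (q n : nat) :
  [pchar F].-nat q -> (0 < n)%N ->
  (forall f : {poly F}, inOmega q n f -> f = 'X - 1) -> #|Omega F q n| = 1%N.
Proof.
move=> q_pchar n_gt0 Omega_n.
have X_size : ('X - 1 : {poly F}) \is a poly_of_size n.+1.
  by rewrite qualifE /= -polyC1 size_XsubC.
apply/eqP/cards1P; exists (NPoly X_size); apply/setP => g; rewrite !inE.
apply/asboolP/eqP => [/Omega_n g_eq | ->]; first exact: val_inj.
exact: XsubC1_inOmega.
Qed.

Theorem corollary2p10 (q : nat) (F : finFieldType) (n1 n2 : nat) :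
  prime_power q -> #|F| = (q ^ 2)%N ->
  odd n1 -> odd n2 -> (0 < n1)%N -> (0 < n2)%N ->
  coprime n1 n2 -> coprime n1 q -> coprime n2 q ->
  (forall f : {poly F}, inOmega q n1 f -> f = 'X - 1) ->
  (forall f : {poly F}, inOmega q n2 f -> f = 'X - 1) ->
  #|Omega F q (n1 * n2)| = (#|Omega F q n1| * #|Omega F q n2|)%N /\
  (#|Omega F q n1| * #|Omega F q n2|)%N = 1%N.
Proof.
move=> [p [k [p_prime _ q_def]]] card_F _ _ n1_gt0 n2_gt0 n12 n1q n2q Omega1 Omega2.
have p_char : p \in [pchar F].
  by apply: (card_finPcharP (n := (k * 2)%N)) => //; rewrite card_F q_def expnM.
have q_pchar : [pchar F].-nat q by rewrite q_def pnatX pnatE // p_char.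
have n_gt0 : (0 < n1 * n2)%N by rewrite muln_gt0 n1_gt0.
rewrite (card_Omega_eq1 q_pchar n1_gt0 Omega1) (card_Omega_eq1 q_pchar n2_gt0 Omega2).
have Omega12 := inOmega_mul_coprime q_pchar n1_gt0 n2_gt0 n12 n1q n2q Omega1 Omega2.
by rewrite (card_Omega_eq1 q_pchar n_gt0 Omega12).
Qed.
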